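(* Let $A$ be a complex vector space of dimension $n\ge2$, let $h$ be a symmetric bilinear form on $A$, let $c\in A$ with $h(\cdot,c)\ne0$, and define $x*y=h(x,c)y+h(x,y)c$. If $h(c,c)\neq0$, then $(A,* )$ is isomorphic to $A^1_{(3)}$ or to $A^{(k),2}_{(3)}$ for some $k\in\{0,\dots,n-2\}$. If $h(c,c)=0$, then $(A,* )$ is isomorphic to $A^{(k),3}_{(3)}$ for some $k\in\{0,\dots,n-2\}$.
   Context: All algebras have basis $e_1,\dots,e_n$ and only the listed products of basis vectors are nonzero. $A^1_{(3)}$: $e_1e_1=2e_1$, $e_1e_j=e_j$, $e_je_j=e_1$ ($j=2,\dots,n$). $A^{(k),2}_{(3)}$ ($0\le k\le n-2$): $e_1e_1=2e_1$, $e_1e_j=e_j$ ($j=2,\dots,n$), $e_le_l=e_1$ ($l=3,\dots,k+2$). $A^{(k),3}_{(3)}$ ($0\le k\le n-2$): $e_1e_2=e_1$, $e_2e_1=2e_1$, $e_2e_2=e_2$, $e_2e_j=e_j$ ($j=3,\dots,n$), $e_le_l=e_1$ ($l=3,\dots,k+2$). *)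

From HB Require Import structures.
From mathcomp Require Import all_boot all_order all_algebra.
From mathcomp Require Import complex.
From mathcomp Require Import reals.
Set Implicit Arguments. Unset Strict Implicit. Unset Printing Implicit Defensive.
Import Order.TTheory GRing.Theory Num.Theory.
Local Open Scope ring_scope.

(* Complex numbers: C = R[i] for R : realType (R is the real numbers up to iso).
   Vector space of dimension n: 'rV[C]_n; basis e_1..e_n of the paper is
   e 0 .. e (n-1) here (paper index m <-> ordinal m-1). *)

Section Algs.
Variable (K : comRingType) (n : nat).

Definition e (i : 'I_n) : 'rV[K]_n := delta_mx 0 i.

Definition mult_of (T : 'I_n -> 'I_n -> 'rV[K]_n) (x y : 'rV[K]_n) : 'rV[K]_n :=
  \sum_(i < n) \sum_(j < n) (x 0 i * y 0 j) *: T i j.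

(* A^1_(3): e1e1=2e1, e1ej=ej, ejej=e1 (j>=2) *)
Definition A1_table (i j : 'I_n) : 'rV[K]_n :=
  if (val i == 0%N) && (val j == 0%N) then 2%:R *: e i
  else if (val i == 0%N) then e j
  else if i == j then (\sum_(l < n | val l == 0%N) e l)
  else 0.

(* A^{(k),2}_(3): e1e1=2e1, e1ej=ej (j>=2), elel=e1 (l=3..k+2) *)
Definition A2_table (k : nat) (i j : 'I_n) : 'rV[K]_n :=
  if (val i == 0%N) && (val j == 0%N) then 2%:R *: e i
  else if (val i == 0%N) then e j
  else if (i == j) && (2 <= val i <= k.+1)%N then (\sum_(l < n | val l == 0%N) e l)
  else 0.

(* A^{(k),3}_(3): e1e2=e1, e2e1=2e1, e2e2=e2, e2ej=ej (j>=3), elel=e1 (l=3..k+2) *)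
Definition A3_table (k : nat) (i j : 'I_n) : 'rV[K]_n :=
  let e1 := \sum_(l < n | val l == 0%N) e l in
  if (val i == 0%N) && (val j == 1%N) then e1
  else if (val i == 1%N) && (val j == 0%N) then 2%:R *: e1
  else if (val i == 1%N) && (val j == 1%N) then e j
  else if (val i == 1%N) && (2 <= val j)%N then e j
  else if (i == j) && (2 <= val i <= k.+1)%N then e1
  else 0.

Definition alg_iso (m1 m2 : 'rV[K]_n -> 'rV[K]_n -> 'rV[K]_n) : Prop :=
  exists f : 'rV[K]_n -> 'rV[K]_n,
    (forall (a : K) (x y : 'rV[K]_n), f (a *: x + y) = a *: f x + f y) /\
    bijective f /\
    (forall x y, f (m1 x y) = m2 (f x) (f y)).

Definition sym_bilinear (h : 'rV[K]_n -> 'rV[K]_n -> K) : Prop :=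
  (forall x y, h x y = h y x) /\
  (forall (a : K) x y z, h (a *: x + y) z = a * h x z + h y z).

Definition star (h : 'rV[K]_n -> 'rV[K]_n -> K) (c : 'rV[K]_n) (x y : 'rV[K]_n)
  : 'rV[K]_n := h x c *: y + h x y *: c.

End Algs.

From HB Require Import structures.
From mathcomp Require Import all_boot all_order all_algebra.
From mathcomp Require Import complex.
From mathcomp Require Import reals.
From mathcomp Require Import fingroup perm ring.
Import Order.TTheory GRing.Theory Num.Theory.
Local Open Scope ring_scope.
Set Implicit Arguments. Unset Strict Implicit. Unset Printing Implicit Defensive.

(* In a basis [b] with [c = g b_i0], the product [x * y = h(x,c) y + h(x,y) c]
   has structure constants [b_i * b_j = G_(i,i0) b_j + G_(i,j) b_i0], where [G]
   is the Gram matrix of [g h]; so it suffices to bring [G] to a normal form.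
   Over an algebraically closed field every symmetric matrix is congruent to
   some [diag(1,...,1,0,...,0)], and such a basis can be chosen extending any
   family with invertible Gram matrix. If [h(c,c) <> 0], take [g = h(c,c)] and
   [b_0 = c / g]: the Gram matrix is [diag(1, D)], giving [A^1] when [D = 1] and
   [A^(k),2] after moving a zero of [D] to position 1. If [h(c,c) = 0], complete
   [c] to a hyperbolic pair [(c, u)], [h(c,u) = 1], [h(u,u) = 0], and extend it
   by a diagonal block, giving [A^(k),3]. *)

Section SymmetricCongruence.
Variable F : numClosedFieldType.

Lemma row_free_col_mx_unit m p (W : 'M[F]_(m, m + p)) :
  row_free W -> exists K : 'M[F]_(p, m + p), col_mx W K \in unitmx.
Proof.
move=> freeW; have rkC : \rank (W^C)%MS = p by rewrite mxrank_compl (eqP freeW) addKn.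
exists (castmx (rkC, erefl) (row_base (W^C)%MS)); rewrite -row_full_unit.
have eqC : (col_mx W (castmx (rkC, erefl) (row_base (W^C)%MS)) :=: W + (W^C)%MS)%MS.
  apply: eqmx_trans (eqmx_sym (addsmxE _ _)) _.
  exact: adds_eqmx (eqmx_trans (eqmx_cast _ _) (eq_row_base _)).
by rewrite /row_full eqC; exact: addsmx_compl_full.
Qed.

Lemma unitmx_block_diag m1 m2 (A : 'M[F]_m1) (D : 'M[F]_m2) :
  (block_mx A 0 0 D \in unitmx) = (A \in unitmx) && (D \in unitmx).
Proof. by rewrite !unitmxE det_lblock unitrM. Qed.

Lemma usubmx_block_diag1 m1 m2 n (Q : 'M[F]_m2) (B : 'M[F]_(m1 + m2, n)) :
  usubmx (block_mx 1%:M 0 0 Q *m B) = usubmx B.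
Proof. by rewrite -{1}[B]vsubmxK mul_block_col mul1mx mul0mx addr0 col_mxKu. Qed.

Lemma block_diag1_congr m1 m2 (G B : 'M[F]_(m1 + m2)) (G1 : 'M[F]_m1) (S Q : 'M[F]_m2) :
  B *m G *m B^T = block_mx G1 0 0 S ->
  (block_mx 1%:M 0 0 Q *m B) *m G *m (block_mx 1%:M 0 0 Q *m B)^T
    = block_mx G1 0 0 (Q *m S *m Q^T).
Proof.
move=> eB; have -> : forall L : 'M[F]_(m1 + m2),
    L *m B *m G *m (L *m B)^T = L *m (B *m G *m B^T) *m L^T.
  by move=> L; rewrite trmx_mul !mulmxA.
rewrite eB tr_block_mx !trmx0 trmx1 !mulmx_block.
by rewrite !(mul0mx, mulmx0, mul1mx, mulmx1, addr0, add0r).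
Qed.

(* Block LDL^T step: clearing the off-diagonal blocks against the invertible
   upper-left block leaves its Schur complement. *)
Lemma sym_block_schur m1 m2 (S : 'M[F]_(m1 + m2)) :
  S^T = S -> ulsubmx S \in unitmx ->
  exists X S2, block_mx 1%:M 0 X 1%:M *m S *m (block_mx 1%:M 0 X 1%:M)^T
               = block_mx (ulsubmx S) 0 0 S2 /\ S2^T = S2.
Proof.
move=> symS unitH; set H := ulsubmx S; set R := ursubmx S; set D := drsubmx S.
have eS : S = block_mx H R R^T D.
  by rewrite -{1}(submxK S) /R trmx_ursub symS.
have symH : H^T = H by rewrite /H trmx_ulsub symS.
have symD : D^T = D by rewrite /D trmx_drsub symS.
exists (- (R^T *m invmx H)), (D - R^T *m invmx H *m R); split; last first.
  by rewrite linearB /= symD !trmx_mul trmxK trmx_inv symH mulmxA.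
rewrite eS tr_block_mx !trmx1 trmx0 !mulmx_block.
rewrite !(mul1mx, mul0mx, mulmx1, mulmx0, addr0, add0r).
have -> : - (R^T *m invmx H) *m H + R^T = 0.
  by rewrite mulNmx -mulmxA mulVmx // mulmx1 addNr.
have -> : H *m (- (R^T *m invmx H))^T + R = 0.
  by rewrite linearN /= mulmxN trmx_mul trmxK trmx_inv symH mulmxA mulmxV // mul1mx addNr.
by rewrite mul0mx add0r mulNmx addrC.
Qed.

Lemma sym_congr_split m1 m2 (G : 'M[F]_(m1 + m2)) (W : 'M[F]_(m1, m1 + m2)) :
  G^T = G -> W *m G *m W^T \in unitmx ->
  exists B S, [/\ B \in unitmx, usubmx B = W, S^T = S &
                  B *m G *m B^T = block_mx (W *m G *m W^T) 0 0 S].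
Proof.
move=> symG unitWGW.
have freeW : row_free W.
  rewrite /row_free eqn_leq rank_leq_row -{1}(mxrank_unit unitWGW).
  by rewrite -mulmxA mxrankM_maxl.
have [K unitWK] := row_free_col_mx_unit freeW.
set S0 := col_mx W K *m G *m (col_mx W K)^T.
have symS0 : S0^T = S0 by rewrite /S0 !trmx_mul trmxK symG mulmxA.
have ulS0 : ulsubmx S0 = W *m G *m W^T.
  by rewrite /S0 tr_col_mx mul_col_mx mul_col_row block_mxKul.
have [X [S [eS symS]]] := sym_block_schur symS0 (etrans (congr1 _ ulS0) unitWGW).
exists (block_mx 1%:M 0 X 1%:M *m col_mx W K), S; split => //.
- by rewrite unitmx_mul unitWK unitmxE det_lblock !det1 mulr1 unitr1.
- by rewrite mul_block_col mul1mx mul0mx addr0 col_mxKu.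
- by rewrite -ulS0 -eS /S0 trmx_mul !mulmxA.
Qed.

Lemma sym_mx_nonisotropic m (S : 'M[F]_m) :
  S^T = S -> S != 0 -> exists x : 'rV[F]_m, (x *m S *m x^T) 0 0 != 0.
Proof.
move=> symS nzS.
have quad_delta i j : ((delta_mx 0 i : 'rV_m) *m S *m (delta_mx 0 j : 'rV_m)^T) 0 0 = S i j.
  by rewrite -rowE trmx_delta -colE !mxE.
have [/existsP [i Sii]|/existsPn diag0] := boolP [exists i, S i i != 0].
  by exists (delta_mx 0 i); rewrite quad_delta.
have /existsP [i /existsP [j Sij]] : [exists i, exists j, S i j != 0].
  apply: contraR nzS => /existsPn S0; apply/eqP/matrixP => i j; rewrite mxE.
  by have /existsPn/(_ j)/negPn/eqP := S0 i.
exists (delta_mx 0 i + delta_mx 0 j).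
have addE (A B : 'M[F]_1) : (A + B) 0 0 = A 0 0 + B 0 0 by rewrite mxE.
rewrite linearD /= !mulmxDl !mulmxDr !addE !quad_delta.
rewrite !(eqP (negPn (diag0 _))) add0r addr0.
have -> : S j i = S i j by rewrite -{1}symS mxE.
by rewrite -mulr2n mulrn_eq0 negb_or Sij.
Qed.

Lemma pid_mx_block1 m k :
  block_mx (1%:M : 'M[F]_1) 0 0 (pid_mx k : 'M[F]_m) = pid_mx k.+1.
Proof.
apply/matrixP => i j.
case: (split_ordP i) => {}i ->; case: (split_ordP j) => {}j ->;
  rewrite ?block_mxEul ?block_mxEur ?block_mxEdl ?block_mxEdr !mxE ?ord1 //=.
Qed.

Lemma sym_congr_pid m (S : 'M[F]_m) : S^T = S ->
  exists P k, [/\ P \in unitmx, (k <= m)%N & P *m S *m P^T = pid_mx k].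
Proof.
elim: m S => [|m IH] S symS.
  by exists 1%:M, 0%N; rewrite unitmx1 pid_mx_0; split => //; apply: flatmx0.
have [->|nzS] := eqVneq S 0.
  by exists 1%:M, 0%N; rewrite unitmx1 mulmx0 mul0mx pid_mx_0.
have [x nzx] := sym_mx_nonisotropic symS nzS.
set a := (x *m S *m x^T) 0 0 in nzx.
pose W := (sqrtC a)^-1 *: x. (* the one use of algebraic closure *)
have W1 : W *m S *m W^T = 1%:M.
  rewrite /W linearZ /= -scalemxAl -scalemxAr -scalemxAl scalerA -expr2 exprVn.
  by rewrite sqrtCK [x *m _ *m _]mx11_scalar -/a -scalemx1 scalerA mulVf ?scale1r.
have unitWSW : W *m S *m W^T \in unitmx by rewrite W1 unitmx1.
have [B [S2 [unitB _ symS2 eB]]] := sym_congr_split (m1 := 1) symS unitWSW.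
have [P [k [unitP lekm eP]]] := IH S2 symS2.
exists (block_mx 1%:M 0 0 P *m B), k.+1; split => //.
  by rewrite unitmx_mul (@unitmx_block_diag 1 m) unitmx1 unitP unitB.
by rewrite (block_diag1_congr _ eB) W1 eP pid_mx_block1.
Qed.

Lemma sym_congr_extend m1 m2 (G : 'M[F]_(m1 + m2)) (W : 'M[F]_(m1, m1 + m2)) :
  G^T = G -> W *m G *m W^T \in unitmx ->
  exists B k, [/\ B \in unitmx, usubmx B = W, (k <= m2)%N &
                  B *m G *m B^T = block_mx (W *m G *m W^T) 0 0 (pid_mx k)].
Proof.
move=> symG unitWGW; have [B [S [unitB BW symS eB]]] := sym_congr_split symG unitWGW.
have [P [k [unitP lekm eP]]] := sym_congr_pid symS.
exists (block_mx 1%:M 0 0 P *m B), k; split => //.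
- by rewrite unitmx_mul unitmx_block_diag unitmx1 unitP unitB.
- by rewrite usubmx_block_diag1.
- by rewrite (block_diag1_congr _ eB) eP.
Qed.

Lemma pid_mx_tperm_congr m (k : 'I_m.+1) :
  perm_mx (tperm 0 k) *m pid_mx k *m (perm_mx (tperm 0 k))^T
    = block_mx (0 : 'M[F]_1) 0 0 (pid_mx k : 'M[F]_m).
Proof.
apply/(@matrixP _ (1 + m) (1 + m)) => i j.
rewrite tr_perm_mx -row_permE -col_permE ![LHS]mxE val_eqE (inj_eq perm_inj).
have -> : (tperm (0%R : 'I_m.+1) k i < k)%N = (0 < i <= k)%N.
  case: tpermP => [->|->|/eqP ne0 /eqP nek]; rewrite ?ltnn ?leqnn ?andbT //.
  by rewrite ltn_neqAle lt0n val_eqE nek -[0%N]/(val (0 : 'I_m.+1)) val_eqE ne0.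
case: (split_ordP i) => {}i ->; case: (split_ordP j) => {}j ->;
  rewrite ?block_mxEul ?block_mxEur ?block_mxEdl ?block_mxEdr !mxE ?ord1 //=.
Qed.

End SymmetricCongruence.

Section StarTable.
Variables (K : comNzRingType) (n : nat).

(* The multiplication table of [star h c] in a basis [b] with [c = g b_i0],
   where [G] is the Gram matrix of [g h] in [b]. *)
Definition star_table (G : 'M[K]_n) (i0 i j : 'I_n) : 'rV[K]_n :=
  G i i0 *: e K j + G i j *: e K i0.

Lemma mult_of_star_table (G : 'M[K]_n) i0 x y :
  mult_of (star_table G i0) x y
    = (x *m G *m (e K i0)^T) 0 0 *: y + (x *m G *m y^T) 0 0 *: e K i0.
Proof.
have -> : (x *m G *m (e K i0)^T) 0 0 = \sum_i x 0 i * G i i0.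
  by rewrite /e trmx_delta -colE !mxE.
have -> : (x *m G *m y^T) 0 0 = \sum_i \sum_j x 0 i * G i j * y 0 j.
  rewrite !mxE exchange_big /=; apply: eq_bigr => j _.
  by rewrite !mxE big_distrl.
rewrite !scaler_suml -big_split /=; apply: eq_bigr => i _.
rewrite [X in _ *: X + _]row_sum_delta scaler_sumr scaler_suml -big_split /=.
apply: eq_bigr => j _; rewrite scalerDr !scalerA.
by congr (_ *: _ + _ *: _); ring.
Qed.
End StarTable.

Section PaperTables.
Variable K : comNzRingType.
Local Notation o n := (lshift n (ord0 : 'I_1)).

Lemma sum_e_val0 m (l0 : 'I_m) :
  val l0 = 0%N -> \sum_(l < m | val l == 0%N) e K l = e K l0.
Proof. by move=> l00; rewrite (big_pred1 l0) // => l; rewrite /= -val_eqE l00. Qed.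

Lemma A1_tableE n (i j : 'I_(1 + n)) : A1_table K i j = star_table 1%:M (o n) i j.
Proof.
rewrite /A1_table /star_table (@sum_e_val0 _ (o n)) //.
case: (split_ordP i) => {}i ->; case: (split_ordP j) => {}j ->;
rewrite !mxE ?ord1 /= ?eq_rshift ?eq_lrshift ?eq_rlshift ?scale0r ?scale1r ?addr0 ?add0r //.
  by rewrite scaler_nat mulr2n.
by case: (i == j); rewrite ?scale1r ?scale0r.
Qed.

Lemma A2_tableE n k (i j : 'I_(1 + (1 + n))) : A2_table K k i j =
  star_table (block_mx 1%:M 0 0 (block_mx 0 0 0 (pid_mx k))) (o (1 + n)) i j.
Proof.
rewrite /A2_table /star_table (@sum_e_val0 _ (o (1 + n))) //.
case: (split_ordP i) => {}i ->; last case: (split_ordP i) => {}i ->;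
case: (split_ordP j) => {}j ->; try case: (split_ordP j) => {}j ->;
rewrite ?(block_mxEul, block_mxEur, block_mxEdl, block_mxEdr) !mxE ?ord1 /=;
rewrite ?eq_rshift ?eq_lrshift ?eq_rlshift ?scale0r ?scale1r ?addr0 ?add0r //.
  by rewrite scaler_nat mulr2n.
by rewrite -[(1 + (1 + i))%N]/(i.+2) ltnS; case: (_ && _); rewrite ?scale1r ?scale0r.
Qed.

Lemma A3_tableE n k (i j : 'I_((1 + 1) + n)) : A3_table K k i j =
  star_table (block_mx (block_mx 0 1%:M 1%:M 0) 0 0 (pid_mx k)) (lshift n (o 1)) i j.
Proof.
rewrite /A3_table /star_table (@sum_e_val0 _ (lshift n (o 1))) //.
case: (split_ordP i) => {}i ->; [case: (split_ordP i) => {}i -> |];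
case: (split_ordP j) => {}j ->; try case: (split_ordP j) => {}j ->;
rewrite ?(block_mxEul, block_mxEur, block_mxEdl, block_mxEdr) !mxE ?ord1 /=;
rewrite ?eq_rshift ?eq_lrshift ?eq_rlshift ?scale0r ?scale1r ?addr0 ?add0r //.
  by rewrite scaler_nat mulr2n.
by rewrite -[(1 + 1 + i)%N]/(i.+2) ltnS; case: (_ && _); rewrite ?scale1r ?scale0r.
Qed.
End PaperTables.

Section SymmetricBilinearForm.
Variables (F : numClosedFieldType) (n : nat) (h : 'rV[F]_n -> 'rV[F]_n -> F).
Hypothesis symbil_h : sym_bilinear h.

Lemma bilinC x y : h x y = h y x. Proof. by case: symbil_h. Qed.

Lemma bilin0l z : h 0 z = 0.
Proof.
case: symbil_h => _ lin; have := lin 1 0 0 z.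
by rewrite scaler0 addr0 mul1r => /(congr1 (fun t => t - h 0 z)); rewrite addrK subrr.
Qed.

Lemma bilinZl a x z : h (a *: x) z = a * h x z.
Proof. by case: symbil_h => _ lin; rewrite -[a *: x]addr0 lin bilin0l addr0. Qed.

Lemma bilinDl x y z : h (x + y) z = h x z + h y z.
Proof. by case: symbil_h => _ lin; rewrite -{1}[x]scale1r lin mul1r. Qed.

Lemma bilinZr a x z : h z (a *: x) = a * h z x.
Proof. by rewrite !(bilinC z) bilinZl. Qed.

Lemma bilinDr x y z : h z (x + y) = h z x + h z y.
Proof. by rewrite !(bilinC z) bilinDl. Qed.

Lemma bilin_suml m (a : 'I_m -> F) (v : 'I_m -> 'rV[F]_n) z :
  h (\sum_i a i *: v i) z = \sum_i a i * h (v i) z.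
Proof.
rewrite (big_morph (h^~ z) (fun x y => bilinDl x y z) (bilin0l z)).
by apply: eq_bigr => i _; rewrite bilinZl.
Qed.

Definition form_mx : 'M[F]_n := \matrix_(i, j) h (e F i) (e F j).

Lemma form_mx_tr : form_mx^T = form_mx.
Proof. by apply/matrixP => i j; rewrite !mxE bilinC. Qed.

Lemma form_mxE x y : h x y = (x *m form_mx *m y^T) 0 0.
Proof.
rewrite {1}[x]row_sum_delta bilin_suml [RHS]mxE.
under [RHS]eq_bigr do rewrite !mxE big_distrl.
rewrite exchange_big /=; apply: eq_bigr => i _.
rewrite bilinC {1}[y]row_sum_delta bilin_suml big_distrr /=.
by apply: eq_bigr => j _; rewrite !mxE bilinC mulrCA mulrC.
Qed.

Lemma form_mx11 x y : x *m form_mx *m y^T = (h x y)%:M.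
Proof. by rewrite form_mxE -mx11_scalar. Qed.

Lemma hyperbolic_partner c x : h c c = 0 -> h x c != 0 ->
  exists u, h c u = 1 /\ h u u = 0.
Proof.
move=> hcc hxc; set b := h x c in hxc.
exists (b^-1 *: (x + (- (h x x / (2 * b))) *: c)).
rewrite !(bilinZl, bilinZr, bilinDl, bilinDr) hcc (bilinC c x) -/b.
by split; field.
Qed.

Lemma star_iso c (B : 'M[F]_n) (g : F) (i0 : 'I_n) (T : 'I_n -> 'I_n -> 'rV[F]_n) :
  B \in unitmx -> c = g *: row i0 B ->
  (forall i j, T i j = star_table (B *m (g *: form_mx) *m B^T) i0 i j) ->
  alg_iso (star h c) (mult_of T).
Proof.
move=> unitB -> eqT.
exists (mulmx^~ (invmx B)); split; first by move=> a x y; rewrite mulmxDl scalemxAl.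
split; first by exists (mulmx^~ B) => x; rewrite /= ?mulmxK ?mulmxKV.
move=> x y; rewrite -[x](mulmxKV unitB) -[y](mulmxKV unitB) !mulmxK //.
move: (x *m invmx B) (y *m invmx B) => {}x {}y.
have -> : mult_of T x y = mult_of (star_table (B *m (g *: form_mx) *m B^T) i0) x y.
  by apply: eq_bigr => i _; apply: eq_bigr => j _; rewrite eqT.
rewrite mult_of_star_table /star !form_mxE rowE mulmxDl -!scalemxAl !mulmxK //.
rewrite scalerA; congr (_ *: _ + _ *: _).
  by rewrite linearZ /= -?scalemxAr -?scalemxAl -?scalemxAr -?scalemxAl trmx_mul !mulmxA.
rewrite -?scalemxAr -?scalemxAl -?scalemxAr -?scalemxAl [RHS]mxE mulrC.
by rewrite trmx_mul !mulmxA.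
Qed.

End SymmetricBilinearForm.

Section StarNormalForms.
Variables (F : numClosedFieldType) (n : nat) (h : 'rV[F]_n.+2 -> 'rV[F]_n.+2 -> F)
  (c : 'rV[F]_n.+2).
Hypothesis symbil_h : sym_bilinear h.

Lemma star_iso_nonisotropic : h c c != 0 ->
  alg_iso (star h c) (mult_of (@A1_table _ n.+2)) \/
  exists k, (k <= n)%N /\ alg_iso (star h c) (mult_of (@A2_table _ n.+2 k)).
Proof.
move=> hcc; set g := h c c.
pose W : 'M[F]_(1, 1 + n.+1) := g^-1 *: c.
have symG : (g *: form_mx h)^T = g *: form_mx h by rewrite linearZ /= form_mx_tr.
have WGW : W *m (g *: form_mx h) *m W^T = 1%:M.
  rewrite -scalemxAr -scalemxAl (form_mx11 symbil_h) /W.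
  by rewrite (bilinZl symbil_h) (bilinZr symbil_h) -/g mulVf // mulr1 scale_scalar_mx mulfV.
have unitWGW : W *m (g *: form_mx h) *m W^T \in unitmx by rewrite WGW unitmx1.
have [B [k [unitB BW lekn eB]]] := sym_congr_extend (m1 := 1) (m2 := n.+1) symG unitWGW.
rewrite WGW in eB.
have rowB : c = g *: row (lshift n.+1 (ord0 : 'I_1)) B.
  by rewrite -row_usubmx BW row_id /W scalerA mulfV ?scale1r.
have [ltkn|geqkn] := ltnP k n.+1.
  right; exists k; split => //.
  pose P : 'M[F]_n.+1 := perm_mx (tperm 0 (Ordinal ltkn)).
  apply: (star_iso symbil_h (B := block_mx 1%:M 0 0 P *m B) (g := g)
                   (i0 := lshift n.+1 (ord0 : 'I_1))).
  - by rewrite unitmx_mul (@unitmx_block_diag _ 1 n.+1) unitmx1 unitmx_perm unitB.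
  - by rewrite {1}rowB -!(@row_usubmx _ 1 n.+1) usubmx_block_diag1.
  - move=> i j; rewrite (block_diag1_congr _ eB) (pid_mx_tperm_congr _ (Ordinal ltkn)).
    exact: A2_tableE.
left; have ekn : k = n.+1 by apply/eqP; rewrite eqn_leq lekn geqkn.
rewrite ekn pid_mx_1 -scalar_mx_block in eB.
apply: (star_iso symbil_h unitB rowB) => i j.
by rewrite eB; exact: A1_tableE.
Qed.

Lemma star_iso_isotropic : h c c = 0 -> (exists x, h x c != 0) ->
  exists k, (k <= n)%N /\ alg_iso (star h c) (mult_of (@A3_table _ n.+2 k)).
Proof.
move=> hcc [x hxc]; have [u [hcu huu]] := hyperbolic_partner symbil_h hcc hxc.
pose W : 'M[F]_(1 + 1, (1 + 1) + n) := col_mx c u.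
have WGW : W *m form_mx h *m W^T = block_mx 0 1%:M 1%:M 0.
  rewrite tr_col_mx mul_col_mx mul_col_row !(form_mx11 symbil_h).
  by rewrite hcc hcu (bilinC symbil_h u) hcu huu raddf0.
have unitWGW : W *m form_mx h *m W^T \in unitmx.
  suff /mulmx1_unit[] : W *m form_mx h *m W^T *m (W *m form_mx h *m W^T) = 1%:M by [].
  by rewrite WGW mulmx_block !(mul0mx, mulmx0, add0r, addr0, mulmx1) -scalar_mx_block.
have [B [k [unitB BW lekn eB]]] :=
  sym_congr_extend (m1 := 1 + 1) (m2 := n) (form_mx_tr symbil_h) unitWGW.
exists k; split => //.
apply: (star_iso symbil_h (g := 1) (i0 := lshift n (lshift 1 (ord0 : 'I_1))) unitB).
  by rewrite scale1r -(@row_usubmx _ (1 + 1) n) BW rowKu row_id.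
by move=> i j; rewrite scale1r eB WGW; exact: A3_tableE.
Qed.
End StarNormalForms.

Theorem proposition3p7 (R : realType) (n : nat) (h : 'rV[R[i]]_n -> 'rV[R[i]]_n -> R[i])
  (c : 'rV[R[i]]_n) :
  (2 <= n)%N ->
  sym_bilinear h ->
  (exists x, h x c != 0) ->
  (h c c != 0 ->
     alg_iso (star h c) (mult_of (@A1_table _ n)) \/
     exists k : nat, (k <= n - 2)%N /\ alg_iso (star h c) (mult_of (@A2_table _ n k))) /\
  (h c c = 0 ->
     exists k : nat, (k <= n - 2)%N /\ alg_iso (star h c) (mult_of (@A3_table _ n k))).
Proof.
case: n h c => [|[|n]] h c // _ symbil_h nondeg; rewrite !subSS subn0; split.
  exact: star_iso_nonisotropic.
by move=> hcc; exact: star_iso_isotropic.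
Qed.
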